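(* Let $k$ be a non-archimedean local field of residue characteristic $2$ and let $B(x)=\sum_{i=1}^n a_i x_i^2$ be an anisotropic diagonal quadratic form on $k^n$ with $0\le\operatorname{ord} a_i\le 1$ for all $i$. Let $z=q^{-\beta}$, $w=zq^{-1}$, $u=z^2q^{-n}$, and let $T\ge0$ be an integer. Then \[ X^B(\beta;\varpi^{2T}) = \sum_{0\le\ell<2T+e+1} z^\ell X^B_\ell(\varpi^{2T}) + \frac{z^{2T+e+1}}{1-w}\,X^B_{2T+e+1}(\varpi^{2T}), \] \[ X^B(\beta;0) = \sum_{0\le\ell<e} z^\ell X^B_\ell(0) + \frac{z^e}{1-u}\,X^B_e(0) + \frac{z^{e+1}}{1-u}\,X^B_{e+1}(0). \]
   Context: $k$ has ring of integers $\mathfrak o$, uniformizer $\varpi$, residue field of cardinality $q$, absolute value normalized by $|\varpi|=q^{-1}$, normalized valuation $\operatorname{ord}$, and $e=\operatorname{ord}(2)$ is the ramification index. On $\mathfrak o^n$ use the additive Haar measure of total mass $1$. For $\rho\in\mathfrak o$ and integer $\ell\ge0$ set $X_\ell^B(\rho)=\operatorname{meas}\{x\in\mathfrak o^n: B(x)-\rho\in 2\varpi^\ell\mathfrak o\}$ and $X^B(\beta;\rho)=\sum_{\ell\ge0} z^\ell X^B_\ell(\rho)$ with $z=q^{-\beta}$ (a power series in $z$, convergent for $\operatorname{Re}\beta>0$). *)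

From HB Require Import structures.
From mathcomp Require Import all_boot all_order all_algebra.
From mathcomp Require Import all_classical all_reals all_analysis.
From mathcomp Require Import complex.
Set Implicit Arguments. Unset Strict Implicit. Unset Printing Implicit Defensive.
Import Order.TTheory GRing.Theory Num.Theory.
Local Open Scope ring_scope.
Local Open Scope classical_set_scope.
Local Open Scope complex_scope.
Local Open Scope ring_scope.

(* Non-archimedean local fields, given by a normalized discrete        *)
(* valuation [ord] (its value at 0 is irrelevant), a uniformizer [pi]   *)
(* and the cardinality [q] of the residue field.                        *)

Section LocalField.
Variables (K : fieldType) (ord : K -> int) (pi : K).

Definition intO (x : K) : Prop := x = 0 \/ (0 <= ord x)%R.

Definition inIdeal (c y : K) : Prop := exists t, intO t /\ y = c * t.

Definition cauchyK (u : nat -> K) : Prop :=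
  forall m : nat, exists N : nat, forall i j : nat, (N <= i)%N -> (N <= j)%N ->
    inIdeal (pi ^+ m) (u i - u j).

Definition convergesK (u : nat -> K) (l : K) : Prop :=
  forall m : nat, exists N : nat, forall i : nat, (N <= i)%N ->
    inIdeal (pi ^+ m) (u i - l).

(* (K, ord) is a complete discretely valued field, ord normalized with   *)
(* uniformizer pi, with finite residue field o / pi o of cardinality q.  *)
Record is_local_field (q : nat) : Prop := {
  lf_mul : forall x y : K, x != 0 -> y != 0 -> ord (x * y) = ord x + ord y;
  lf_add : forall x y : K, x != 0 -> y != 0 -> x + y != 0 ->
             Num.min (ord x) (ord y) <= ord (x + y);
  lf_unif : pi != 0 /\ ord pi = 1;
  lf_residue : exists r : seq K,
      [/\ size r = q,
          (forall a, a \in r -> intO a),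
          (forall i j, (i < q)%N -> (j < q)%N ->
               inIdeal pi (nth 0 r i - nth 0 r j) -> i = j) &
          (forall x, intO x -> exists2 a, a \in r & inIdeal pi (x - a))];
  lf_complete : forall u : nat -> K, cauchyK u -> exists l, convergesK u l
}.
End LocalField.

(* k^n with the sigma-algebra generated by the balls c + pi^m o^n       *)
(* (= the Borel sigma-algebra of the valuation topology).                *)

Definition vecK (K : fieldType) (n : nat) := 'rV[K]_n.
HB.instance Definition _ (K : fieldType) n := Choice.on (vecK K n).
HB.instance Definition _ (K : fieldType) n := GRing.Zmodule.on (vecK K n).
HB.instance Definition _ (K : fieldType) n := isPointed.Build (vecK K n) 0.

Section Space.
Variables (K : fieldType) (ord : K -> int) (pi : K) (n : nat).

Definition ballK (c : vecK K n) (m : nat) : set (vecK K n) :=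
  [set x | forall i : 'I_n, inIdeal ord (pi ^+ m) (x ord0 i - c ord0 i)].

Definition intOn : set (vecK K n) := [set x | forall i : 'I_n, intO ord (x ord0 i)].

Definition balls : set (set (vecK K n)) :=
  [set A | exists (c : vecK K n) (m : nat), A = ballK c m].

Definition kspace := g_sigma_algebraType balls.

Definition translate (c : vecK K n) (A : set (vecK K n)) : set (vecK K n) :=
  [set x + c | x in A].

Definition is_haar_on_On (R : realType) (mu : {measure set kspace -> \bar R}) : Prop :=
  mu (intOn : set kspace) = 1%E /\
  forall (c : vecK K n) (A : set kspace),
    intOn c -> measurable A -> (A : set (vecK K n)) `<=` intOn ->
    mu (translate c A : set kspace) = mu A.

Definition diagQF (a : 'I_n -> K) (x : vecK K n) : K :=
  \sum_(i < n) a i * x ord0 i ^+ 2.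

Definition anisotropic (a : 'I_n -> K) : Prop :=
  forall x : vecK K n, diagQF a x = 0 -> x = 0.

Definition Xset (a : 'I_n -> K) (l : nat) (rho : K) : set (vecK K n) :=
  [set x | intOn x /\ inIdeal ord (2 * pi ^+ l) (diagQF a x - rho)].

Definition Xl (R : realType) (mu : {measure set kspace -> \bar R})
  (a : 'I_n -> K) (l : nat) (rho : K) : R :=
  fine (mu (Xset a l rho : set kspace)).
End Space.

Definition cvgC (R : realType) (u : nat -> R[i]) (L : R[i]) : Prop :=
  forall eps : R, 0 < eps -> exists N : nat, forall m : nat, (N <= m)%N ->
    `|u m - L| < eps%:C.

Definition series_sumC (R : realType) (X : nat -> R) (z L : R[i]) : Prop :=
  cvgC (fun N => \sum_(l < N) z ^+ l * (X l)%:C) L.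

From HB Require Import structures.
From mathcomp Require Import all_boot all_order all_algebra.
From mathcomp Require Import all_classical all_reals all_analysis.
From mathcomp Require Import complex.
From mathcomp Require Import zify ring lra.
Set Implicit Arguments. Unset Strict Implicit. Unset Printing Implicit Defensive.
Import Order.TTheory GRing.Theory Num.Theory.
Local Open Scope complex_scope.
Local Open Scope ring_scope.

(* Both series are eventually geometric, and the tail is summed in closed form.

   For rho = 0 and l >= e, a vector x in o^n with B(x) in 2 pi^(l+2) o has all
   its coordinates in pi o: if some x_i were a unit, Hensel's lemma would give a
   square root v of 1 - B(x)/(a_i x_i^2), and replacing x_i by v x_i would make
   x isotropic.  Hence X_(l+2)(0) is the set pi X_l(0), of measure
   q^-n X_l(0), which makes the coefficients geometric of period 2 and ratio u.

   For rho = pi^(2T) and l >= 2T+e+1, every x counted by X_l(rho) has a first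
   index i with a_i x_i not in pi^(T+1) o, and d = ord(a_i x_i) <= T, since
   otherwise B(x) would lie in pi^(2T+1) o.  On the piece with given (i, d),
   moving x_i by pi^(l-d) r changes B(x) by 2 pi^l (a_i x_i / pi^d) r modulo
   2 pi^(l+1) with a_i x_i / pi^d a unit, so the piece of X_l is the disjoint union of
   q translates of the piece of X_(l+1), and X_(l+1) = X_l / q.

   Measures are computed by counting: a subset of o^n that is a union of balls
   of radius |pi^M| has measure q^(-Mn) times the number of those balls. *)

Section GeometricSeries.
Variable R : realType.
Local Notation C := R[i].

Lemma normcE (z : C) : `|z| = (Normc.normc z)%:C.
Proof. by case: z => x y; rewrite normc_def. Qed.

Lemma normc_ge0 (z : C) : 0 <= Normc.normc z.
Proof. by case: z => x y /=; exact: sqrtr_ge0. Qed.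

Lemma normcX (z : C) j : Normc.normc (z ^+ j) = Normc.normc z ^+ j.
Proof.
elim: j => [|j IH]; first by rewrite !expr0 Normc.normc1.
by rewrite !exprS Normc.normcM IH.
Qed.

Lemma exprn_lt_small (r d : R) : 0 <= r -> r < 1 -> 0 < d -> exists N, r ^+ N < d.
Proof.
move=> r0 r1 d0.
have rn : `|r| < 1 by rewrite ger0_norm.
have := @cvgr_lt R nat _ _ _ 0 (cvg_expr rn) d d0.
by case=> N _ hN; exists N; exact: hN N (leqnn N).
Qed.

Lemma norm_expr_divn_lt1 (z : C) k m : `|z| < 1 -> (0 < m)%N ->
  `|z ^+ k.+1 / m%:R| < 1.
Proof.
move=> z1 m0; rewrite normrM normfV normrX normr_nat.
have z0 := normr_ge0 z.
apply: (le_lt_trans _ z1); apply: (@le_trans _ _ (`|z| ^+ k.+1)).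
  by rewrite ler_pdivrMr ?ltr0n // ler_peMr ?exprn_ge0 // ler1n.
by rewrite exprS ler_piMr // exprn_ile1 // ltW.
Qed.

Lemma cvgC_periodic_contraction (E : nat -> C) (rho : C) p :
  (0 < p)%N -> `|rho| < 1 -> (forall m, E (m + p)%N = rho * E m) -> cvgC E 0.
Proof.
move=> p0 r1 hE.
have EJ j k : E (j * p + k)%N = rho ^+ j * E k.
  elim: j => [|j IH]; first by rewrite mul0n add0n expr0 mul1r.
  have -> : (j.+1 * p + k = (j * p + k) + p)%N by rewrite mulSn; lia.
  by rewrite hE IH exprS mulrA.
set r := Normc.normc rho.
have rr : r < 1 by move: r1; rewrite normcE -(@ltcR R).
have rg0 : 0 <= r by exact: normc_ge0.
set C0 := \sum_(k < p) Normc.normc (E k).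
have C0g : 0 <= C0 by apply: sumr_ge0 => k _; exact: normc_ge0.
have Ek k : (k < p)%N -> Normc.normc (E k) <= C0.
  move=> kp; rewrite /C0 (bigD1 (Ordinal kp)) //= lerDl.
  by apply: sumr_ge0 => k' _; exact: normc_ge0.
move=> eps e0.
have [N hN] := exprn_lt_small rg0 rr (divr_gt0 e0 (ltr_pwDr ltr01 C0g : 0 < C0 + 1)).
exists (N * p)%N => m hm.
rewrite subr0 (divn_eq m p) EJ normcE ltcR Normc.normcM normcX -/r.
have jN : (N <= m %/ p)%N by rewrite leq_divRL.
apply: (le_lt_trans (y := r ^+ N * (C0 + 1))); last by rewrite -ltr_pdivlMr ?ltr_pwDr.
apply: ler_pM; [exact: exprn_ge0 | exact: normc_ge0 | |].
  by apply: ler_wiXn2l => //; exact: ltW.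
by apply: le_trans (Ek _ _) _; [rewrite ltn_mod | rewrite lerDl].
Qed.

Lemma cvgC_geometric_tail (c : nat -> C) (rho : C) L0 p : (0 < p)%N -> `|rho| < 1 ->
  (forall l, (L0 <= l)%N -> c (l + p)%N = rho * c l) ->
  cvgC (fun N => \sum_(l < N) c l)
    (\sum_(l < L0) c l + (\sum_(i < p) c (L0 + i)%N) / (1 - rho)).
Proof.
move=> p0 r1 hc.
have r0 : 1 - rho != 0.
  by rewrite subr_eq0; apply/eqP => e1; move: r1; rewrite -e1 normr1 ltxx.
set A := \sum_(i < p) c (L0 + i)%N.
set lim := \sum_(l < L0) c l + A / (1 - rho).
pose E m := \sum_(l < L0 + m) c l - lim.
have EE m : E (m + p)%N = rho * E m.
  rewrite /E /lim (addnC m p) addnA !big_split_ord /=.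
  have -> : \sum_(i < m) c (L0 + p + i)%N = rho * \sum_(i < m) c (L0 + i)%N.
    rewrite mulr_sumr; apply: eq_bigr => i _.
    by rewrite -hc ?leq_addr // addnAC.
  by rewrite -/A; field.
move=> eps /(cvgC_periodic_contraction p0 r1 EE) [N hN].
exists (L0 + N)%N => m hm.
have -> : \sum_(l < m) c l - lim = E (m - L0)%N - 0 by rewrite /E subnKC ?subr0 //; lia.
by apply: hN; lia.
Qed.

End GeometricSeries.

Section LocalField.
Variables (K : fieldType) (ord : K -> int) (pi : K) (q : nat).
Hypothesis hK : is_local_field ord pi q.

Local Notation o := (intO ord).
Local Notation pid m x := (inIdeal ord (pi ^+ m) x).

Lemma ordM x y : x != 0 -> y != 0 -> ord (x * y) = ord x + ord y.
Proof. move=> x0 y0; exact: (lf_mul hK x0 y0). Qed.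

Lemma pi_neq0 : pi != 0. Proof. by case: (lf_unif hK). Qed.
Lemma ord_pi : ord pi = 1. Proof. by case: (lf_unif hK). Qed.

Lemma ord1 : ord 1 = 0.
Proof.
have h : ord 1 = ord 1 + ord 1 by rewrite -ordM ?oner_neq0 ?mulr1.
move: h; lia.
Qed.

Lemma ordV x : x != 0 -> ord x^-1 = - ord x.
Proof.
move=> x0; have := ordM x0 (invr_neq0 x0); rewrite divff // ord1 => h.
move: h; lia.
Qed.

Lemma ordX x k : x != 0 -> ord (x ^+ k) = ord x *+ k.
Proof.
move=> x0; elim: k => [|k IH]; first by rewrite expr0 ord1.
by rewrite exprS ordM ?expf_neq0 // IH mulrS.
Qed.

Lemma ord_piX k : ord (pi ^+ k) = k%:Z.
Proof. rewrite ordX ?pi_neq0 // ord_pi; exact: natz. Qed.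

Lemma ordN x : x != 0 -> ord (- x) = ord x.
Proof.
move=> x0.
have n1 : (-1 : K) != 0 by rewrite oppr_eq0 oner_eq0.
have h1 : ord (-1) = 0.
  have h : ord 1 = ord (-1) + ord (-1) by rewrite -ordM // mulrNN mulr1.
  rewrite ord1 in h; lia.
by rewrite -mulN1r ordM // h1 add0r.
Qed.

Lemma intOE x : x != 0 -> o x <-> 0 <= ord x.
Proof.
move=> x0; split => [[e|//]|h]; last by right.
by rewrite e eqxx in x0.
Qed.

Lemma intO0 : o 0. Proof. by left. Qed.
Lemma intO1 : o 1. Proof. by right; rewrite ord1. Qed.
Lemma intO_pi : o pi. Proof. by right; rewrite ord_pi. Qed.

Lemma intON x : o x -> o (- x).
Proof.
case: (eqVneq x 0) => [->|x0]; first by rewrite oppr0 => _; exact: intO0.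
by rewrite !intOE ?oppr_eq0 // ordN.
Qed.

Lemma intOM x y : o x -> o y -> o (x * y).
Proof.
case: (eqVneq x 0) => [->|x0]; first by rewrite mul0r => _ _; exact: intO0.
case: (eqVneq y 0) => [->|y0]; first by rewrite mulr0 => _ _; exact: intO0.
rewrite !intOE ?mulf_neq0 // ordM // => hx hy; exact: addr_ge0.
Qed.

Lemma intOD x y : o x -> o y -> o (x + y).
Proof.
case: (eqVneq x 0) => [->|x0]; first by rewrite add0r.
case: (eqVneq y 0) => [->|y0]; first by rewrite addr0.
case: (eqVneq (x + y) 0) => [->|s0]; first by move=> _ _; exact: intO0.
rewrite !intOE // => hx hy.
apply: le_trans (lf_add hK x0 y0 s0).
by rewrite le_min hx hy.
Qed.

Lemma intOB x y : o x -> o y -> o (x - y).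
Proof. by move=> hx hy; apply: intOD => //; exact: intON. Qed.

Lemma intOX x k : o x -> o (x ^+ k).
Proof. move=> hx; elim: k => [|k IH]; [exact: intO1| rewrite exprS; exact: intOM]. Qed.

Lemma intO_nat k : o k%:R.
Proof. elim: k => [|k IH]; [exact: intO0| rewrite mulrS; apply: intOD => //; exact: intO1]. Qed.

Lemma inIdeal_divE c y : c != 0 -> inIdeal ord c y <-> o (y / c).
Proof.
move=> c0; split=> [[t [ot ->]]|h].
  by rewrite mulrAC divff // mul1r.
by exists (y / c); split => //; rewrite mulrC divfK.
Qed.

Lemma inIdeal_ord c y : c != 0 -> y != 0 -> inIdeal ord c y <-> ord c <= ord y.
Proof.
move=> c0 y0; rewrite inIdeal_divE // intOE ?mulf_neq0 ?invr_neq0 //.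
by rewrite ordM ?invr_neq0 // ordV // subr_ge0.
Qed.

Lemma inIdeal_eq_ord c c' y : c != 0 -> c' != 0 -> ord c = ord c' ->
  inIdeal ord c y <-> inIdeal ord c' y.
Proof.
move=> c0 c'0 e; case: (eqVneq y 0) => [->|y0].
  by split=> _; exists 0; (split; [exact: intO0|rewrite mulr0]).
by rewrite !inIdeal_ord // e.
Qed.

Lemma piX_neq0 m : pi ^+ m != 0. Proof. exact: expf_neq0 pi_neq0. Qed.

Lemma pid0 m : pid m 0.
Proof. by exists 0; split; [exact: intO0|rewrite mulr0]. Qed.

Lemma pidE m x : x != 0 -> pid m x <-> m%:Z <= ord x.
Proof. by move=> x0; rewrite inIdeal_ord ?piX_neq0 // ord_piX. Qed.

Lemma pidD m x y : pid m x -> pid m y -> pid m (x + y).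
Proof.
move=> [s [os ->]] [t [ot ->]]; exists (s + t); split; first exact: intOD.
by rewrite mulrDr.
Qed.

Lemma pidN m x : pid m x -> pid m (- x).
Proof. by move=> [s [os ->]]; exists (- s); split; [exact: intON|rewrite mulrN]. Qed.

Lemma pidB m x y : pid m x -> pid m y -> pid m (x - y).
Proof. by move=> hx hy; apply: pidD => //; exact: pidN. Qed.

Lemma pidMr m x t : pid m x -> o t -> pid m (x * t).
Proof. by move=> [s [os ->]] ot; exists (s * t); split; [exact: intOM|rewrite mulrA]. Qed.

Lemma pidMl m x t : pid m x -> o t -> pid m (t * x).
Proof. by rewrite mulrC; exact: pidMr. Qed.

Lemma pidMM m k x y : pid m x -> pid k y -> pid (m + k) (x * y).
Proof.
move=> [s [os ->]] [t [ot ->]]; exists (s * t); split; first exact: intOM.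
by rewrite exprD mulrACA.
Qed.

Lemma pid_le k m x : (k <= m)%N -> pid m x -> pid k x.
Proof.
move=> km [s [os ->]]; exists (pi ^+ (m - k) * s); split.
  by apply: intOM => //; apply: intOX; exact: intO_pi.
by rewrite mulrA -exprD subnKC.
Qed.

Lemma pid_intO m x : pid m x -> o x.
Proof. by move=> [s [os ->]]; apply: intOM => //; apply: intOX; exact: intO_pi. Qed.

Lemma pid0E x : pid 0 x <-> o x.
Proof. split; first exact: pid_intO. by move=> h; exists x; rewrite expr0 mul1r. Qed.

Lemma pid_piX m : pid m (pi ^+ m).
Proof. by exists 1; split; [exact: intO1|rewrite mulr1]. Qed.

Lemma pid_piXM m k x : pid m x -> pid (k + m) (pi ^+ k * x).
Proof. by move=> h; apply: pidMM => //; exact: pid_piX. Qed.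

Lemma pid_piXM_inv m k x : pid (k + m) (pi ^+ k * x) -> pid m x.
Proof.
move=> [s [os e]]; exists s; split => //.
apply: (mulfI (piX_neq0 k)); by rewrite e exprD mulrA.
Qed.

Lemma pid_eq0 x : (forall m, pid m x) -> x = 0.
Proof.
move=> h; case: (eqVneq x 0) => // x0; exfalso.
have := h (`|ord x|.+1)%N; rewrite pidE // => hh.
move: hh; lia.
Qed.

Lemma unit_of_notin_pid1 u : o u -> ~ pid 1 u -> u != 0 /\ ord u = 0.
Proof.
move=> ou nu; have u0 : u != 0 by apply/negP => /eqP e; apply: nu; rewrite e; exact: pid0.
split => //; move: ou; rewrite intOE // => h.
have : ~ (1%:Z <= ord u) by move=> h1; apply: nu; rewrite pidE.
move: h; lia.
Qed.

Lemma one_notin_pid1 : ~ pid 1 1.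
Proof. by rewrite pidE ?oner_neq0 // ord1. Qed.

Lemma intO_inv_unit u : u != 0 -> ord u = 0 -> o u^-1.
Proof. by move=> u0 hu; rewrite intOE ?invr_neq0 // ordV // hu oppr0. Qed.

Lemma pidMr_unit m x u : u != 0 -> ord u = 0 -> pid m (x * u) -> pid m x.
Proof.
move=> u0 hu h; have := pidMr h (intO_inv_unit u0 hu); by rewrite mulfK.
Qed.

Lemma ordD_pid u w (d : nat) : u != 0 -> ord u = d%:Z -> pid d.+1 w ->
  u + w != 0 /\ ord (u + w) = d%:Z.
Proof.
move=> u0 hu hw; case: (eqVneq w 0) => [->|w0]; first by rewrite addr0.
move: hw; rewrite pidE // => hw.
have s0 : u + w != 0.
  apply/eqP => e0; have : w = - u by apply/eqP; rewrite -subr_eq0 opprK addrC e0.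
  move=> wu; move: hw; rewrite wu ordN // hu; lia.
split => //; have h1 := lf_add hK u0 w0 s0.
have h3 : u + w + - w != 0 by rewrite addrK.
have nw : - w != 0 by rewrite oppr_eq0.
have h4 := lf_add hK s0 nw h3.
rewrite addrK ordN // in h4.
rewrite min_l in h1; last by rewrite hu; lia.
move: h4; case: (leP (ord (u + w)) (ord w)) => h5.
  by move=> h6; rewrite -hu; apply/eqP; rewrite eq_le h6 h1.
move=> h6; move: hw h6; rewrite hu; lia.
Qed.

Section Hensel.
Variable t : K.
Hypothesis ot : o t.

(* Iterates of l |-> pi t - l^2, a contraction of pi o, converging to a root of l + l^2 = pi t. *)
Fixpoint hensel_seq k : K := if k is k'.+1 then pi * t - hensel_seq k' ^+ 2 else 0.
Local Notation s := hensel_seq.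

Lemma hensel_seq_pid1 k : pid 1 (s k).
Proof.
elim: k => [|k IH] /=; first exact: pid0.
apply: pidB; first by apply: pidMr => //; rewrite -[pi]expr1; exact: pid_piX.
rewrite expr2; apply: pidMr => //; exact: pid_intO IH.
Qed.

Lemma hensel_seq_step k : pid k.+1 (s k.+1 - s k).
Proof.
elim: k => [|k IH].
  rewrite /= expr0n /= subr0 subr0; apply: pidMr => //; rewrite -[pi]expr1; exact: pid_piX.
have -> : s k.+2 - s k.+1 = - ((s k.+1 - s k) * (s k.+1 + s k)) by rewrite /=; ring.
apply: pidN; rewrite -addn1; apply: pidMM => //; apply: pidD; exact: hensel_seq_pid1.
Qed.

Lemma hensel_seq_near i d : pid i (s (i + d) - s i).
Proof.
elim: d => [|d IH]; first by rewrite addn0 subrr; exact: pid0.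
have -> : s (i + d.+1) - s i = (s (i + d).+1 - s (i + d)) + (s (i + d) - s i).
  by rewrite addnS; ring.
apply: pidD => //; apply: (pid_le _ (hensel_seq_step _)); lia.
Qed.

Lemma hensel_seq_near_le m i : (m <= i)%N -> pid m (s i - s m).
Proof. by move=> mi; rewrite -(subnKC mi); exact: hensel_seq_near. Qed.

Lemma cauchy_hensel_seq : cauchyK ord pi s.
Proof.
move=> m; exists m => i j mi mj.
have -> : s i - s j = (s i - s m) - (s j - s m) by ring.
apply: pidB; exact: hensel_seq_near_le.
Qed.

Lemma exists_add_sqr_eq : exists l, l + l ^+ 2 = pi * t.
Proof.
have [l hl] := lf_complete hK cauchy_hensel_seq.
have ol : o l.
  have [N hN] := hl 0%N.
  have := hN N (leqnn N) => /pid_intO h.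
  have := intOB (pid_intO (hensel_seq_pid1 N)) h; by rewrite opprB addrC subrK.
exists l; apply/eqP; rewrite -subr_eq0; apply/eqP; apply: pid_eq0 => m.
have [N hN] := hl m.
have -> : l + l ^+ 2 - pi * t = (l - s N.+1) + (l - s N) * (l + s N).
  by rewrite /=; ring.
apply: pidD.
  by rewrite -opprB; apply: pidN; apply: hN; exact: leqnSn.
apply: pidMr; first by rewrite -opprB; apply: pidN; apply: hN.
apply: intOD => //; exact: pid_intO (hensel_seq_pid1 N).
Qed.

Lemma exists_sqrt_1_4pi : exists y, y ^+ 2 = 1 + 2 * 2 * pi * t.
Proof.
have [l hl] := exists_add_sqr_eq; exists (1 + 2 * l).
have -> : 2 * 2 * pi * t = 2 * 2 * (pi * t) by ring.
rewrite -hl; ring.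
Qed.
End Hensel.

Definition resid : seq K := sval (cid (lf_residue hK)).

Lemma residP : [/\ size resid = q,
          (forall a, a \in resid -> o a),
          (forall i j, (i < q)%N -> (j < q)%N ->
               inIdeal ord pi (nth 0 resid i - nth 0 resid j) -> i = j) &
          (forall x, o x -> exists2 a, a \in resid & inIdeal ord pi (x - a))].
Proof. exact: (svalP (cid (lf_residue hK))). Qed.

Lemma pid1E x : pid 1 x <-> inIdeal ord pi x.
Proof. by rewrite expr1. Qed.

Lemma resid_intO (k : 'I_q) : o (nth 0 resid k).
Proof.
case: residP => hs ho _ _; apply: ho; apply: mem_nth; by rewrite hs.
Qed.

Lemma resid_inj (i j : 'I_q) : pid 1 (nth 0 resid i - nth 0 resid j) -> i = j.
Proof.
case: residP => _ _ hd _; rewrite pid1E => h; apply: val_inj => /=; exact: hd.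
Qed.

Lemma resid_cover x : o x -> exists k : 'I_q, pid 1 (x - nth 0 resid k).
Proof.
case: residP => hs _ _ hc /hc [a ar ha].
have kq : (index a resid < q)%N by rewrite -hs index_mem.
exists (Ordinal kq); rewrite pid1E /=; by rewrite nth_index.
Qed.

Definition digits M (f : {ffun 'I_M -> 'I_q}) : K :=
  \sum_(j < M) nth 0 resid (f j) * pi ^+ j.

Lemma digits_intO M (f : {ffun 'I_M -> 'I_q}) : o (digits f).
Proof.
rewrite /digits; elim/big_ind: _ => //; [exact: intO0| exact: intOD|].
move=> j _; apply: intOM; [exact: resid_intO| apply: intOX; exact: intO_pi].
Qed.

Definition digits_tail M (f : {ffun 'I_M.+1 -> 'I_q}) : {ffun 'I_M -> 'I_q} :=
  [ffun j => f (lift ord0 j)].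

Lemma digitsS M (f : {ffun 'I_M.+1 -> 'I_q}) :
  digits f = nth 0 resid (f ord0) + pi * digits (digits_tail f).
Proof.
rewrite /digits big_ord_recl expr0 mulr1 mulr_sumr; congr (_ + _).
apply: eq_bigr => j _; rewrite ffunE lift0 exprS; ring.
Qed.

Lemma digits_cover M x : o x -> exists f : {ffun 'I_M -> 'I_q}, pid M (x - digits f).
Proof.
elim: M x => [|M IH] x ox.
  have [k _] := resid_cover ox; exists [ffun=> k].
  by rewrite /digits big_ord0 subr0; apply/pid0E.
have [k hk] := resid_cover ox.
have [t [ot et]] := hk; rewrite expr1 in et.
have [g hg] := IH t ot.
pose f : {ffun 'I_M.+1 -> 'I_q} :=
  [ffun j => if unlift ord0 j is Some j' then g j' else k].
have tf : digits_tail f = g by apply/ffunP => j; rewrite !ffunE liftK.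
have f0 : f ord0 = k by rewrite ffunE unlift_none.
exists f; rewrite digitsS tf f0.
have -> : x - (nth 0 resid k + pi * digits g) = pi ^+ 1 * (t - digits g).
  by rewrite expr1 mulrBr -et; ring.
by rewrite -add1n; apply: pid_piXM.
Qed.

Lemma digits_inj M (f g : {ffun 'I_M -> 'I_q}) : pid M (digits f - digits g) -> f = g.
Proof.
elim: M f g => [|M IH] f g h.
  by apply/ffunP => -[].
rewrite !digitsS in h.
have e : nth 0 resid (f ord0) + pi * digits (digits_tail f)
          - (nth 0 resid (g ord0) + pi * digits (digits_tail g))
   = (nth 0 resid (f ord0) - nth 0 resid (g ord0))
     + pi ^+ 1 * (digits (digits_tail f) - digits (digits_tail g)).
  by rewrite expr1; ring.
rewrite e in h.
have h1 : pid 1 (pi ^+ 1 * (digits (digits_tail f) - digits (digits_tail g))).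
  by apply: pidMr; [exact: pid_piX| apply: intOB; exact: digits_intO].
have h0 : pid 1 (nth 0 resid (f ord0) - nth 0 resid (g ord0)).
  have := pidB (pid_le (isT : (1 <= M.+1)%N) h) h1; by rewrite addrK.
have f0 := resid_inj h0.
rewrite f0 subrr add0r in h.
have ht := IH _ _ (pid_piXM_inv (h : pid (1 + M) _)).
apply/ffunP => j; case: (unliftP ord0 j) => [j' ->|->] //.
by have := congr1 (fun F : {ffun 'I_M -> 'I_q} => F j') ht; rewrite !ffunE.
Qed.

Section Space.
Variable n : nat.
Local Notation V := (vecK K n).

Definition digit_array M := {ffun 'I_n -> {ffun 'I_M -> 'I_q}}.

Definition vec_of M (F : digit_array M) : V := \row_i digits (F i).

Lemma vec_ofE M (F : digit_array M) i : vec_of F ord0 i = digits (F i).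
Proof. by rewrite mxE. Qed.

Lemma vec_of_intOn M (F : digit_array M) : intOn ord (vec_of F).
Proof. by move=> i; rewrite vec_ofE; exact: digits_intO. Qed.

Lemma vec_of_cover M (x : V) : intOn ord x -> exists F : digit_array M, ballK ord pi (vec_of F) M x.
Proof.
move=> ox.
have : forall i : 'I_n, exists f : {ffun 'I_M -> 'I_q}, pid M (x ord0 i - digits f).
  move=> i; exact: digits_cover.
case/fin_all_exists => f hf.
exists [ffun i => f i] => i; by rewrite vec_ofE ffunE.
Qed.

Lemma vec_of_inj M (F G : digit_array M) :
  (forall i, pid M (vec_of F ord0 i - vec_of G ord0 i)) -> F = G.
Proof.
move=> h; apply/ffunP => i; apply: digits_inj; by have := h i; rewrite !vec_ofE.
Qed.

Lemma card_digit_array M : #|{: digit_array M}| = ((q ^ M) ^ n)%N.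
Proof. by rewrite card_ffun card_ffun !card_ord. Qed.

Local Notation On := (@intOn K ord n).

Local Open Scope classical_set_scope.

Lemma in_bigsetU (I : eqType) (T : Type) (s : seq I) (F : I -> set T) x :
  (\big[setU/set0]_(i <- s) F i) x <-> exists2 i, i \in s & F i x.
Proof.
elim: s => [|i s IH]; first by rewrite big_nil; split=> // -[].
rewrite big_cons; split.
  case=> [h|/IH [j js hj]]; first by exists i; rewrite ?mem_head.
  by exists j; rewrite // in_cons js orbT.
move=> [j]; rewrite in_cons => /orP [/eqP ->|js] hj; first by left.
by right; apply/IH; exists j.
Qed.

Lemma ball_sub_intOn (c : V) m : intOn ord c -> ballK ord pi c m `<=` On.
Proof.
move=> oc x hx i; have := hx i => /pid_intO h.
have := intOD h (oc i); by rewrite subrK.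
Qed.

Lemma ball_sym (c x : V) m : ballK ord pi c m x -> ballK ord pi x m c.
Proof. by move=> h i; have := pidN (h i); rewrite opprB. Qed.

Definition ball0 m : set V := ballK ord pi (0 : V) m.

Lemma ball_translate (c : V) m : ballK ord pi c m = translate c (ball0 m).
Proof.
apply/seteqP; split => x.
  move=> hx; exists (x - c); last by rewrite subrK.
  by move=> i; rewrite /ball0 !mxE subr0; exact: hx i.
move=> [y hy <-] i; have := hy i; rewrite !mxE subr0 => h.
by rewrite addrK.
Qed.

Lemma ball0_sub_intOn m : ball0 m `<=` On.
Proof. apply: ball_sub_intOn => i; rewrite mxE; exact: intO0. Qed.

Section Measure.
Variables (R : realType) (mu : {measure set (kspace ord pi n) -> \bar R}).
Hypothesis hmu : is_haar_on_On mu.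
Local Notation S := (kspace ord pi n).

Lemma measurable_ball (c : V) m : measurable (ballK ord pi c m : set S).
Proof. apply: sub_sigma_algebra; by exists c, m. Qed.

Lemma mu_ball (c : V) m : intOn ord c -> mu (ballK ord pi c m : set S) = mu (ball0 m : set S).
Proof.
move=> oc; rewrite ball_translate; case: hmu => _ h; apply: h => //.
  exact: measurable_ball.
exact: ball0_sub_intOn.
Qed.

Lemma measure_bigsetU_seq (I : eqType) (s : seq I) (F : I -> set S) : uniq s ->
  (forall i, measurable (F i)) -> (forall i j, i != j -> F i `&` F j = set0) ->
  measurable (\big[setU/set0]_(i <- s) F i) /\
  mu (\big[setU/set0]_(i <- s) F i) = \sum_(i <- s) mu (F i).
Proof.
move=> us mF dF; split; first by apply: bigsetU_measurable => i _.
elim: s us => [|i s IH] /=; first by rewrite !big_nil measure0.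
move=> /andP [ni us]; rewrite !big_cons measureU //.
- by congr (_ + _); exact: IH us.
- by apply: (@bigsetU_measurable _ S) => j _.
apply/seteqP; split => // x [hi /in_bigsetU [j js hj]].
have ij : i != j by apply/eqP => e; rewrite e js in ni.
by rewrite -(dF _ _ ij); split.
Qed.

Lemma mu_intOn : mu (On : set S) = 1%E.
Proof. by case: hmu. Qed.

Lemma intOn_ball0 : On = ball0 0.
Proof.
apply/seteqP; split => x hx i.
  rewrite /ball0 mxE subr0 expr0; apply/pid0E; exact: hx i.
by have := hx i; rewrite mxE subr0 => /pid_intO.
Qed.

Lemma measurable_intOn : measurable (On : set S).
Proof. rewrite intOn_ball0; exact: measurable_ball. Qed.

Lemma mu_sub_intOn_le1 (A : set S) : measurable A -> A `<=` On -> (mu A <= 1)%E.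
Proof.
move=> mA sA; rewrite -mu_intOn; apply: le_measure => //; rewrite inE //; exact: measurable_intOn.
Qed.

Lemma mu_fineK (A : set S) : measurable A -> A `<=` On ->
  mu A = (fine (mu A))%:E.
Proof.
move=> mA sA; have h1 := mu_sub_intOn_le1 mA sA.
have : mu A \is a fin_num.
  by rewrite ge0_fin_numE ?measure_ge0 // (le_lt_trans h1) ?ltry.
by move=> h; rewrite fineK.
Qed.

Definition saturated M (A : set V) :=
  A `<=` On /\ (forall x y, A x -> ballK ord pi x M y -> A y).

Definition ball_part M (A : set V) (F : digit_array M) : set V :=
  if `[< A (vec_of F) >] then ballK ord pi (vec_of F) M else set0.

Lemma saturated_decomp M A : saturated M A ->
  A = \big[setU/set0]_(F <- index_enum {: digit_array M}) ball_part A F.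
Proof.
move=> [sA iA]; apply/seteqP; split => x.
  move=> Ax; have [F hF] := vec_of_cover M (sA x Ax).
  apply/in_bigsetU; exists F; first by rewrite mem_index_enum.
  have AF : A (vec_of F) by apply: iA Ax _; exact: ball_sym.
  by rewrite /ball_part; case: asboolP.
move/in_bigsetU => [F _]; rewrite /ball_part; case: asboolP => // AF hx.
exact: iA AF hx.
Qed.

Lemma measurable_ball_part M A (F : digit_array M) : measurable (ball_part A F : set S).
Proof. rewrite /ball_part; case: asboolP => _; [exact: measurable_ball| exact: measurable0]. Qed.

Lemma balls_disj M (F G : digit_array M) : F != G ->
  ballK ord pi (vec_of F) M `&` ballK ord pi (vec_of G) M = set0.
Proof.
move=> FG; apply/seteqP; split => // x [h1 h2].
apply: (negP FG); apply/eqP; apply: vec_of_inj => i.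
by have := pidB (h2 i) (h1 i); rewrite opprB [_ + (_ - _)]addrC addrA subrK.
Qed.

Lemma ball_parts_disj M A (F G : digit_array M) : F != G -> ball_part A F `&` ball_part A G = set0.
Proof.
move=> FG; rewrite /ball_part; case: asboolP => _; last by rewrite set0I.
case: asboolP => _; last by rewrite setI0.
exact: balls_disj.
Qed.

Definition ball_mass M := fine (mu (ball0 M : set S)).

Lemma mu_ball0E M : mu (ball0 M : set S) = (ball_mass M)%:E.
Proof. apply: mu_fineK; [exact: measurable_ball| exact: ball0_sub_intOn]. Qed.

Lemma measure_saturated M A : saturated M A -> measurable (A : set S) /\
  mu (A : set S) = (\sum_(F : digit_array M) (if `[< A (vec_of F) >] then ball_mass M else 0))%:E.
Proof.
move=> iA; have eA := saturated_decomp iA.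
have [h1 h2] := measure_bigsetU_seq (index_enum_uniq {: digit_array M})
  (@measurable_ball_part M A) (@ball_parts_disj M A).
rewrite -eA in h1 h2.
split => //; rewrite h2 -sumEFin; apply: eq_bigr => F _.
rewrite /ball_part; case: asboolP => AF.
  by rewrite mu_ball ?mu_ball0E //; exact: vec_of_intOn.
by rewrite measure0.
Qed.

Lemma saturated_intOn M : saturated M On.
Proof.
split => // x y ox hy; apply: (ball_sub_intOn ox hy).
Qed.

Lemma ball_mass_card M : (#|{: digit_array M}|)%:R * ball_mass M = 1.
Proof.
have [_ h] := measure_saturated (saturated_intOn M); rewrite mu_intOn in h.
have e : \sum_(F : digit_array M) (if `[< On (vec_of F) >] then ball_mass M else 0)
    = \sum_(F : digit_array M) ball_mass M.
  by apply: eq_bigr => F _; case: asboolP => // h'; exfalso; apply: h'; exact: vec_of_intOn.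
move: h; rewrite e sumr_const => -[] h.
by rewrite mulr_natl h.
Qed.

Lemma translateE (c : V) (A : set V) y : translate c A y <-> A (y - c).
Proof.
split; first by move=> [x Ax <-]; rewrite addrK.
by move=> h; exists (y - c) => //; rewrite subrK.
Qed.

Lemma saturated_translate M A (c : V) : saturated M A -> On c -> saturated M (translate c A).
Proof.
move=> [sA iA] oc; split.
  move=> y /translateE /sA h i; have := intOD (h i) (oc i); by rewrite !mxE subrK.
move=> x y /translateE Ax hy; apply/translateE; apply: iA Ax _ => i.
have := hy i; by rewrite !mxE opprD addrACA subrr addr0.
Qed.

Lemma saturatedI M A (C : set V) : saturated M A ->
  (forall x y, A x -> C x -> ballK ord pi x M y -> C y) -> saturated M (A `&` C).
Proof.
move=> [sA iA] hC; split; first by move=> x [/sA].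
move=> x y [Ax Cx] hy; split; [exact: iA Ax hy| exact: hC x y Ax Cx hy].
Qed.

Lemma measurable_saturated M A : saturated M A -> measurable (A : set S).
Proof. by move/measure_saturated => []. Qed.

Lemma fine_mu_bigsetU (I : eqType) (s : seq I) (F : I -> set S) : uniq s ->
  (forall i, measurable (F i)) -> (forall i, F i `<=` On) ->
  (forall i j, i != j -> F i `&` F j = set0) ->
  fine (mu (\big[setU/set0]_(i <- s) F i)) = \sum_(i <- s) fine (mu (F i)).
Proof.
move=> us mF sF dF; have [_ h] := measure_bigsetU_seq us mF dF; rewrite h.
rewrite (eq_bigr (fun i => (fine (mu (F i)))%:E)); last by move=> i _; apply: mu_fineK.
by rewrite sumEFin.
Qed.

Section Form.
Variable e : nat.
Hypothesis h2 : (2 : K) != 0.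
Hypothesis he : ord 2 = e%:Z.
Variable a : 'I_n -> K.
Hypothesis haniso : anisotropic a.
Hypothesis hord : forall i : 'I_n, 0 <= ord (a i) <= 1.

Local Notation B := (diagQF a).

Lemma pid_mul2 k y : pid k y -> pid (e + k) (2 * y).
Proof. apply: pidMM; rewrite pidE // he //. Qed.

Lemma inIdeal2E l y : inIdeal ord (2 * pi ^+ l) y <-> pid (e + l) y.
Proof.
apply: inIdeal_eq_ord; rewrite ?mulf_neq0 ?piX_neq0 //.
by rewrite ordM ?piX_neq0 // he !ord_piX PoszD.
Qed.

Lemma pid_mul2piX z l k : pid (e + l + k) (2 * pi ^+ l * z) <-> pid k z.
Proof.
case: (eqVneq z 0) => [->|z0]; first by rewrite mulr0; split => _; exact: pid0.
rewrite !pidE ?mulf_neq0 ?piX_neq0 // !ordM ?piX_neq0 ?mulf_neq0 //.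
rewrite (_ : ord 2 = e%:Z); last exact: he.
rewrite ord_piX; first by split; lia.
exact: piX_neq0.
Qed.

Definition evec i s : V := \row_j (if j == i then s else 0).

Lemma diagQF_add_evec (x : V) i s :
  B (x + evec i s) = B x + a i * (2 * x ord0 i * s + s ^+ 2).
Proof.
rewrite /diagQF (bigD1 i) //= [in RHS](bigD1 i) //= !mxE eqxx.
have -> : \sum_(j < n | j != i) a j * (x + evec i s) ord0 j ^+ 2
        = \sum_(j < n | j != i) a j * x ord0 j ^+ 2.
  apply: eq_bigr => j ji; rewrite !mxE (negbTE ji) addr0 //.
ring.
Qed.

Lemma evecE i s : evec i s ord0 i = s.
Proof. by rewrite mxE eqxx. Qed.

Lemma ball_add_evec (x : V) i M r : o r -> ballK ord pi x M (x + evec i (pi ^+ M * r)).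
Proof.
move=> orr j; rewrite mxE addrAC subrr add0r mxE.
case: ifP => _; [exact: pidMr (pid_piX M) orr| exact: pid0].
Qed.

Lemma evecN i s : evec i (- s) = - evec i s.
Proof. by apply/rowP => j; rewrite !mxE; case: ifP; rewrite ?oppr0. Qed.

Lemma coef_neq0 i : a i != 0.
Proof.
apply/negP => /eqP ai0.
have : B (0 + evec i 1) = 0.
  rewrite diagQF_add_evec /diagQF big1 ?ai0 ?mul0r ?add0r // => j _.
  by rewrite mxE expr0n mulr0.
move/haniso; rewrite add0r => /(congr1 (fun v : V => v ord0 i)).
by rewrite evecE mxE; apply/eqP; exact: oner_neq0.
Qed.

Lemma coef_intO i : o (a i).
Proof. by right; case/andP: (hord i). Qed.

Lemma diagQF_sub (x y : V) : B y - B x =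
  \sum_(i < n) a i * ((y ord0 i - x ord0 i) * (2 * x ord0 i + (y ord0 i - x ord0 i))).
Proof.
rewrite /diagQF -sumrB; apply: eq_bigr => i _; ring.
Qed.

Lemma diagQF_ball M k (x y : V) : (k <= e + M)%N -> (k <= M + M)%N -> On x ->
  ballK ord pi x M y -> pid k (B y - B x).
Proof.
move=> k1 k2 ox hy; rewrite diagQF_sub; elim/big_ind: _ => //; first exact: pid0.
  exact: pidD.
move=> i _; apply: pidMl; last exact: coef_intO.
have hd := hy i; rewrite mulrDr; apply: pidD.
  rewrite mulrCA; apply: (pid_le k1); apply: pid_mul2; apply: pidMr => //; exact: ox i.
apply: (pid_le k2); exact: pidMM.
Qed.

Lemma saturated_Xset l rho M : (l <= M)%N -> (e + l <= M + M)%N ->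
  saturated M (Xset ord pi a l rho).
Proof.
move=> lM eM; split; first by move=> x [].
move=> x y [ox hx] hy; split; first exact: (ball_sub_intOn ox hy).
rewrite inIdeal2E in hx *.
have -> : B y - rho = (B y - B x) + (B x - rho) by ring.
apply/inIdeal2E; apply: pidD; last exact: hx.
apply: (diagQF_ball (M:=M)) => //; by rewrite leq_add2l.
Qed.

Lemma diagQF_scale_coord (x : V) i v :
  B (x + evec i (x ord0 i * v - x ord0 i)) = B x + a i * x ord0 i ^+ 2 * (v ^+ 2 - 1).
Proof. by rewrite diagQF_add_evec; ring. Qed.

Lemma aniso_notin_coord_ideal (x : V) i : x ord0 i != 0 ->
  ~ inIdeal ord (2 * 2 * pi * (a i * x ord0 i ^+ 2)) (B x).
Proof.
move=> x0; set c := a i * x ord0 i ^+ 2 => hI.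
have d0 : 2 * 2 * pi * c != 0 by rewrite !mulf_neq0 ?pi_neq0 ?coef_neq0 ?expf_neq0.
set t := B x / (2 * 2 * pi * c).
have ot : o t by apply/inIdeal_divE.
have hBx : B x = 2 * 2 * pi * c * t by rewrite /t mulrC divfK.
(* Rescaling x_i by a square root v of 1 - B(x)/c makes x isotropic. *)
have [v hv] := exists_sqrt_1_4pi (intON ot).
have /haniso/(congr1 (fun w : V => w ord0 i)) :
    B (x + evec i (x ord0 i * v - x ord0 i)) = 0.
  by rewrite diagQF_scale_coord -/c hv hBx; ring.
rewrite !mxE eqxx addrC subrK => /eqP; rewrite mulf_eq0 (negbTE x0) /= => /eqP v0.
move: hv; rewrite v0 expr0n /= => h0.
apply: one_notin_pid1.
have -> : (1 : K) = 1 + 2 * 2 * pi * - t + 2 * 2 * pi * t by ring.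
rewrite -h0 add0r.
rewrite -!mulrA; apply: pidMl; last exact: (intO_nat 2).
apply: pidMl; last exact: (intO_nat 2).
by apply: pidMr => //; rewrite -[pi]expr1; exact: pid_piX.
Qed.

Lemma aniso_pid1_coords (x : V) : On x -> pid (e + e + 2) (B x) -> forall i, pid 1 (x ord0 i).
Proof.
move=> ox hB i; apply: contrapT => /(unit_of_notin_pid1 (ox i)) [x0 xo].
apply: (aniso_notin_coord_ideal x0).
case: (eqVneq (B x) 0) => [->|b0]; first by exists 0; split; [exact: intO0|rewrite mulr0].
have ai0 := coef_neq0 i.
apply/inIdeal_ord => //; first by rewrite !mulf_neq0 ?pi_neq0 ?expf_neq0.
move: hB; rewrite pidE // => hB.
rewrite !ordM ?mulf_neq0 ?expf_neq0 ?pi_neq0 // he ord_pi xo.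
by have /andP [_ h1] := hord i; move: hB h1; lia.
Qed.

Definition pi_scale (A : set V) : set V := [set (pi *: (x : 'rV[K]_n) : V) | x in A].

Lemma pi_scaleE (y : V) i : (pi *: (y : 'rV[K]_n) : V) ord0 i = pi * y ord0 i.
Proof. by rewrite mxE. Qed.

Lemma diagQF_scale (x : V) : B (pi *: (x : 'rV[K]_n)) = pi ^+ 2 * B x.
Proof.
rewrite /diagQF mulr_sumr; apply: eq_bigr => i _; rewrite mxE; ring.
Qed.

Lemma pi_unscaleK (y : V) : (y : V) = (pi *: (pi^-1 *: (y : 'rV[K]_n)) : V).
Proof. by apply/rowP => i; rewrite !mxE mulrA divff ?pi_neq0 // mul1r. Qed.

Lemma pi_unscaleE (y : V) i : ((pi^-1 *: (y : 'rV[K]_n)) : V) ord0 i = y ord0 i / pi.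
Proof. by rewrite mxE mulrC. Qed.

Lemma Xset0_add2 l : (e <= l)%N ->
  Xset ord pi a l.+2 0 = pi_scale (Xset ord pi a l 0).
Proof.
move=> el; apply/seteqP; split => y.
  move=> [oy]; rewrite subr0 inIdeal2E => hy.
  have hP : forall i, pid 1 (y ord0 i).
    apply: aniso_pid1_coords => //; apply: pid_le hy; lia.
  exists (pi^-1 *: (y : 'rV[K]_n)); last by rewrite -pi_unscaleK.
  split.
    move=> i; rewrite pi_unscaleE; have := hP i; rewrite pid1E; rewrite inIdeal_divE ?pi_neq0 //.
  rewrite subr0 inIdeal2E; apply: (@pid_piXM_inv _ 2); rewrite -diagQF_scale -pi_unscaleK.
  by rewrite (_ : (2 + (e + l))%N = e + l.+2)%N; last lia.
move=> [x [ox hx] <-]; split.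
  by move=> i; rewrite pi_scaleE; apply: intOM; [exact: intO_pi| exact: ox i].
move: hx; rewrite !subr0 !inIdeal2E diagQF_scale => h.
by rewrite (_ : (e + l.+2 = 2 + (e + l))%N); [exact: pid_piXM| lia].
Qed.

Definition scaled_ball_part M (A : set V) (F : digit_array M) : set V :=
  if `[< A (vec_of F) >] then ballK ord pi (pi *: (vec_of F : 'rV[K]_n) : V) M.+1 else set0.

Lemma measurable_scaled_ball_part M A (F : digit_array M) :
  measurable (scaled_ball_part A F : set S).
Proof.
rewrite /scaled_ball_part; case: asboolP => _; [exact: measurable_ball| exact: measurable0]. Qed.

Lemma scaled_ball_parts_disj M A (F G : digit_array M) : F != G ->
  scaled_ball_part A F `&` scaled_ball_part A G = set0.
Proof.
move=> FG; rewrite /scaled_ball_part; case: asboolP => _; last by rewrite set0I.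
case: asboolP => _; last by rewrite setI0.
apply/seteqP; split => // x [g1 g2].
apply: (negP FG); apply/eqP; apply: vec_of_inj => i.
have := pidB (g2 i) (g1 i); rewrite !pi_scaleE.
have -> : x ord0 i - pi * vec_of G ord0 i - (x ord0 i - pi * vec_of F ord0 i)
   = pi ^+ 1 * (vec_of F ord0 i - vec_of G ord0 i) by rewrite expr1; ring.
by rewrite -addn1 addnC; exact: pid_piXM_inv.
Qed.

Lemma pi_scale_decomp M A : saturated M A ->
  pi_scale A = \big[setU/set0]_(F <- index_enum {: digit_array M}) scaled_ball_part A F.
Proof.
move=> [sA iA]; apply/seteqP; split => y.
  move=> [x Ax <-]; have [F hF] := vec_of_cover M (sA x Ax).
  apply/in_bigsetU; exists F; first by rewrite mem_index_enum.
  have AF : A (vec_of F) by apply: iA Ax _; exact: ball_sym.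
  rewrite /scaled_ball_part; case: asboolP => // _ i; rewrite !pi_scaleE.
  have -> : pi * x ord0 i - pi * vec_of F ord0 i = pi ^+ 1 * (x ord0 i - vec_of F ord0 i).
    by rewrite expr1; ring.
  by rewrite -addn1 addnC; apply: pid_piXM; exact: hF i.
move/in_bigsetU => [F _]; rewrite /scaled_ball_part; case: asboolP => // AF hy.
exists (pi^-1 *: (y : 'rV[K]_n)); last by rewrite -pi_unscaleK.
apply: (iA _ _ AF) => i; rewrite pi_unscaleE.
apply: (@pid_piXM_inv _ 1); rewrite add1n.
have -> : pi ^+ 1 * (y ord0 i / pi - vec_of F ord0 i) = y ord0 i - pi * vec_of F ord0 i.
  by rewrite expr1 mulrBr mulrCA divff ?pi_neq0 // mulr1.
by have := hy i; rewrite pi_scaleE.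
Qed.

Lemma measure_pi_scale M A : saturated M A -> measurable (pi_scale A : set S) /\
  mu (pi_scale A : set S) =
    (\sum_(F : digit_array M) (if `[< A (vec_of F) >] then ball_mass M.+1 else 0))%:E.
Proof.
move=> iA; have eA := pi_scale_decomp iA.
have [h1 h3] := measure_bigsetU_seq (index_enum_uniq {: digit_array M})
  (@measurable_scaled_ball_part M A) (@scaled_ball_parts_disj M A).
rewrite -eA in h1 h3.
split => //; rewrite h3 -sumEFin; apply: eq_bigr => F _.
rewrite /scaled_ball_part; case: asboolP => AF.
  rewrite mu_ball ?mu_ball0E // => i; rewrite pi_scaleE.
  by apply: intOM; [exact: intO_pi| exact: vec_of_intOn].
by rewrite measure0.
Qed.

Lemma q_gt0 : (0 < q)%N.
Proof. by have [k _] := resid_cover intO0; case: k => k /=; case: q. Qed.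

Lemma ball_massE M : ball_mass M = (((q ^ M) ^ n)%N%:R)^-1.
Proof.
have h := ball_mass_card M; rewrite card_digit_array in h.
have nz : ((q ^ M) ^ n)%N%:R != 0 :> R.
  by rewrite pnatr_eq0 -lt0n !expn_gt0 q_gt0.
by apply: (mulfI nz); rewrite h divff.
Qed.

Lemma ball_massS M : ball_mass M.+1 = ball_mass M / (q ^ n)%N%:R.
Proof.
rewrite !ball_massE expnS expnMn natrM invfM mulrC. reflexivity.
Qed.

Lemma fine_mu_pi_scale M A : saturated M A ->
  fine (mu (pi_scale A : set S)) = fine (mu (A : set S)) / (q ^ n)%N%:R.
Proof.
move=> iA; have [_ h1] := measure_saturated iA; have [_ h3] := measure_pi_scale iA.
rewrite h1 h3 /= mulr_suml; apply: eq_bigr => F _; rewrite ball_massS.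
by case: asboolP; rewrite ?mul0r.
Qed.

Lemma Xl0_rec l : (e <= l)%N ->
  Xl mu a l.+2 0 = Xl mu a l 0 / (q ^ n)%N%:R.
Proof.
move=> el; rewrite /Xl Xset0_add2 //; apply: (fine_mu_pi_scale (M:=l)).
apply: saturated_Xset => //; lia.
Qed.

Section PowerTarget.
Variable T : nat.
Local Notation rho := (pi ^+ (2 * T)).

Definition lead_at (i : 'I_n) (d : nat) (x : V) : Prop :=
  [/\ forall j : 'I_n, (j < i)%N -> pid T.+1 (a j * x ord0 j),
      a i * x ord0 i != 0 & ord (a i * x ord0 i) = d%:Z].

Lemma sqr_term_pid (x : V) j : On x -> pid T.+1 (a j * x ord0 j) ->
  pid (2 * T).+1 (a j * x ord0 j ^+ 2).
Proof.
move=> ox hj; case: (eqVneq (x ord0 j) 0) => [->|x0].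
  rewrite expr0n mulr0; exact: pid0.
have ai0 := coef_neq0 j.
move: hj; rewrite !pidE ?mulf_neq0 ?expf_neq0 // !ordM ?expf_neq0 //.
have := hord j; move/andP => [h0 h1]; lia.
Qed.

Lemma lead_at_exists l (x : V) : ((2 * T).+1 <= e + l)%N -> On x ->
  pid (e + l) (B x - rho) -> exists (i : 'I_n) (d : 'I_T.+1), lead_at i d x.
Proof.
move=> Tl ox hx.
pose xa k := if (insub k : option 'I_n) is Some i then a i * x ord0 i else 0.
have xaE (i : 'I_n) : xa i = a i * x ord0 i by rewrite /xa valK.
pose pb k := (k < n)%N && ~~ `[< pid T.+1 (xa k) >].
have [k pk] : exists k, pb k.
  apply: contrapT => hn.
  have all_small : forall j : 'I_n, pid T.+1 (a j * x ord0 j).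
    move=> j; apply: contrapT => hj; apply: hn; exists j.
    by rewrite /pb ltn_ord /= xaE; case: asboolP.
  have hB : pid (2 * T).+1 (B x).
    rewrite /diagQF; elim/big_ind: _ => //; [exact: pid0|exact: pidD|].
    move=> j _; exact: sqr_term_pid.
  have hr : pid (2 * T).+1 rho.
    have -> : rho = B x - (B x - rho) by ring.
    apply: pidB => //; exact: pid_le Tl hx.
  by move: hr; rewrite pidE ?piX_neq0 // ord_piX; lia.
case: (ex_minnP (ex_intro _ k pk)) => m pm mmin.
move/andP: pm => [mn pm]; pose i := Ordinal mn.
have hi : ~ pid T.+1 (a i * x ord0 i) by rewrite -xaE; move: pm; case: asboolP.
have [u0 hu] : a i * x ord0 i != 0 /\ (0 <= ord (a i * x ord0 i)).
  have oai : o (a i * x ord0 i) by apply: intOM; [exact: coef_intO| exact: ox i].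
  have nz : a i * x ord0 i != 0 by apply/eqP => e0; apply: hi; rewrite e0; exact: pid0.
  by split => //; move/intOE: oai => /(_ nz).
have dT : (`|ord (a i * x ord0 i)| < T.+1)%N.
  have : ~ (T.+1%:Z <= ord (a i * x ord0 i)) by move=> h; apply: hi; rewrite pidE.
  move: hu; lia.
exists i, (Ordinal dT); split => //=.
  move=> j ji; apply: contrapT => hj.
  have := mmin j; rewrite /pb (ltn_trans ji mn) /= xaE.
  case: asboolP => // _ /(_ isT); rewrite leqNgt ji //.
by rewrite gez0_abs.
Qed.

Lemma lead_at_uniq i i' d d' (x : V) : (d <= T)%N -> (d' <= T)%N ->
  lead_at i d x -> lead_at i' d' x -> i = i' /\ d = d'.
Proof.
move=> dT d'T [g1 g2 g3] [g1' g2' g3'].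
have ii : i = i'.
  apply: val_inj => /=; case: (ltngtP i i') => // hlt.
  - have := g1' i hlt; rewrite pidE // g3; lia.
  - have := g1 i' hlt; rewrite pidE // g3'; lia.
split => //; move: g3'; rewrite -ii g3; lia.
Qed.

Lemma lead_at_ball M i (d : nat) (x y : V) : (d <= T)%N -> (T < M)%N ->
  lead_at i d x -> ballK ord pi x M y -> lead_at i d y.
Proof.
move=> dT TM [g1 g2 g3] hy.
have eq j : a j * y ord0 j = a j * x ord0 j + a j * (y ord0 j - x ord0 j) by ring.
have sm j : pid T.+1 (a j * (y ord0 j - x ord0 j)).
  apply: (pid_le TM); apply: pidMl; [exact: hy j| exact: coef_intO].
split.
- move=> j ji; rewrite eq; apply: pidD; [exact: g1| exact: sm].
- have hs : pid d.+1 (a i * (y ord0 i - x ord0 i)) by apply: (pid_le _ (sm i)); lia.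
  by rewrite eq; have [] := ordD_pid g2 g3 hs.
- have hs : pid d.+1 (a i * (y ord0 i - x ord0 i)) by apply: (pid_le _ (sm i)); lia.
  by rewrite eq; have [] := ordD_pid g2 g3 hs.
Qed.

Definition lead_unit i d (x : V) := a i * x ord0 i / pi ^+ d.

Lemma lead_unit_unit i d (x : V) :
  lead_at i d x -> lead_unit i d x != 0 /\ ord (lead_unit i d x) = 0.
Proof.
move=> [_ g2 g3]; split; first by rewrite mulf_neq0 ?invr_neq0 ?piX_neq0.
rewrite ordM ?invr_neq0 ?piX_neq0 // ordV ?piX_neq0 // g3 ord_piX; lia.
Qed.

Lemma lead_unit_intO i d (x : V) : lead_at i d x -> o (lead_unit i d x).
Proof. by move=> /lead_unit_unit [u0 hu]; rewrite intOE // hu. Qed.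

Lemma diagQF_add_lead l i (d : nat) (x : V) r : (d <= T)%N -> ((2 * T) + e + 1 <= l)%N ->
  o r ->
  pid (e + l).+1 (B (x + evec i (pi ^+ (l - d) * r)) - B x
                - 2 * pi ^+ l * (lead_unit i d x * r)).
Proof.
move=> dT hl orr; rewrite diagQF_add_evec.
have dl : (d <= l)%N by lia.
have hp : pi ^+ l = pi ^+ (l - d) * pi ^+ d by rewrite -exprD subnK.
have -> : B x + a i * (2 * x ord0 i * (pi ^+ (l - d) * r) + (pi ^+ (l - d) * r) ^+ 2) -
    B x - 2 * pi ^+ l * (lead_unit i d x * r) = (pi ^+ (l - d) * pi ^+ (l - d)) * (a i * r ^+ 2).
  rewrite /lead_unit hp; field; exact: piX_neq0.
apply: pidMr; last by apply: intOM; [exact: coef_intO| exact: intOX].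
rewrite -exprD; apply: pid_le (pid_piX _); lia.
Qed.

Lemma Xset_step_lead l i (d : nat) (y : V) r : (d <= T)%N -> ((2 * T) + e + 1 <= l)%N ->
  o r -> lead_at i d y -> pid (e + l) (B y - rho) ->
  (pid (e + l).+1 (B (y + evec i (pi ^+ (l - d) * - r)) - rho) <->
   pid 1 ((B y - rho) / (2 * pi ^+ l) - lead_unit i d y * r)).
Proof.
move=> dT hl orr hQ hy.
have h20 : 2 * pi ^+ l != 0 by rewrite mulf_neq0 ?piX_neq0.
have E := @diagQF_add_lead l i d y (- r) dT hl (intON orr).
set c := (B y - rho) / (2 * pi ^+ l).
have ec : B y - rho = 2 * pi ^+ l * c by rewrite /c mulrC divfK.
have -> : B (y + evec i (pi ^+ (l - d) * - r)) - rho =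
   (B (y + evec i (pi ^+ (l - d) * - r)) - B y - 2 * pi ^+ l * (lead_unit i d y * - r))
   + 2 * pi ^+ l * (c - lead_unit i d y * r).
  by rewrite mulrBr -ec; ring.
rewrite -addn1 in E; rewrite -addn1 -(pid_mul2piX _ l 1); split => h.
  by have := pidB h E; rewrite addrC addKr.
by apply: pidD.
Qed.

Section FixedLevel.
Variable l : nat.
Hypothesis hl : ((2 * T) + e + 1 <= l)%N.

Definition XT k := Xset ord pi a k rho.
Definition lead_slice (i : 'I_n) (d : 'I_T.+1) := XT l `&` lead_at i d.
Definition lead_slice1 (i : 'I_n) (d : 'I_T.+1) := XT l.+1 `&` lead_at i d.
Definition lead_shift (i : 'I_n) (d : nat) (k : 'I_q) : V :=
  evec i (pi ^+ (l - d) * nth 0 resid k).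
Local Notation shifted i d k := (translate (lead_shift i d k) (lead_slice1 i d)).

Lemma saturated_XT : saturated l.+1 (XT l).
Proof. apply: saturated_Xset; lia. Qed.
Lemma saturated_XT1 : saturated l.+1 (XT l.+1).
Proof. apply: saturated_Xset; lia. Qed.

Lemma saturated_lead M A i (d : 'I_T.+1) :
  (T < M)%N -> saturated M A -> saturated M (A `&` lead_at i d).
Proof.
move=> TM iA; apply: saturatedI => // x y _ Cx hy; apply: lead_at_ball Cx hy => //.
by rewrite -ltnS.
Qed.

Lemma saturated_lead_slice1 i d : saturated l.+1 (lead_slice1 i d).
Proof. apply: saturated_lead; [lia| exact: saturated_XT1]. Qed.

Lemma lead_shift_intOn i d k : On (lead_shift i d k).
Proof.
move=> j; rewrite mxE; case: ifP => _; last exact: intO0.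
apply: intOM; [apply: intOX; exact: intO_pi| exact: resid_intO].
Qed.

Lemma XTE k (x : V) : XT k x <-> On x /\ pid (e + k) (B x - rho).
Proof. by rewrite /XT /Xset /=; split => -[g1 g2]; split => //; move: g2; rewrite inIdeal2E. Qed.

Definition XT_quot (y : V) := (B y - rho) / (2 * pi ^+ l).

Lemma in_translate_lead_slice1 i (d : 'I_T.+1) k y :
  shifted i d k y <->
  (lead_slice i d y /\ pid 1 (XT_quot y - lead_unit i d y * nth 0 resid k)).
Proof.
have dT : (d <= T)%N by rewrite -ltnS.
have TM : (T < l - d)%N by lia.
have ork := resid_intO k.
split.
  move=> [x [/XTE [ox hx] Qx] <-].
  have bx : ballK ord pi x (l - d) (x + lead_shift i d k) by exact: ball_add_evec.
  have oy := ball_sub_intOn ox bx.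
  have Qy := lead_at_ball dT TM Qx bx.
  have Yy : lead_slice i d (x + lead_shift i d k).
    split => //; apply/XTE; split => //.
    have E := @diagQF_add_lead l i d x (nth 0 resid k) dT hl ork.
    have -> : B (x + lead_shift i d k) - rho =
      (B (x + lead_shift i d k) - B x - 2 * pi ^+ l * (lead_unit i d x * nth 0 resid k))
      + (2 * pi ^+ l * (lead_unit i d x * nth 0 resid k) + (B x - rho)) by ring.
    apply: pidD; first exact: pid_le E.
    apply: pidD.
      rewrite -[(e + l)%N]addn0; apply/(pid_mul2piX _ l 0); apply/pid0E.
      by apply: intOM => //; exact: lead_unit_intO Qx.
    apply: pid_le hx; lia.
  split => //.
  have [/XTE [_ hy] _] := Yy.
  apply/(Xset_step_lead dT hl ork Qy hy).
  have -> : x + lead_shift i d k + evec i (pi ^+ (l - d) * - nth 0 resid k) = x.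
    by rewrite /lead_shift mulrN evecN addrK.
  by rewrite -addnS.
move=> [[/XTE [oy hy] Qy] hP].
apply/translateE; split; last first.
  rewrite /lead_shift -evecN -mulrN; apply: lead_at_ball dT TM Qy _.
  exact: ball_add_evec (intON ork).
apply/XTE; split.
  rewrite /lead_shift -evecN -mulrN.
  exact: (ball_sub_intOn oy (@ball_add_evec y i (l - d) _ (intON ork))).
rewrite addnS /lead_shift -evecN -mulrN; apply/(Xset_step_lead dT hl ork Qy hy); exact: hP.
Qed.

Definition lead_index := ('I_n * 'I_T.+1)%type.
Definition lead_part k (p : lead_index) := XT k `&` lead_at p.1 p.2.

Lemma XT_decomp k : ((2 * T).+1 <= e + k)%N ->
  XT k = \big[setU/set0]_(p <- index_enum {: lead_index}) lead_part k p.
Proof.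
move=> Tk; apply/seteqP; split => x.
  move=> hx; have [ox hB] : On x /\ pid (e + k) (B x - rho) by apply/XTE.
  have [i [d Qx]] := lead_at_exists Tk ox hB.
  apply/in_bigsetU; exists (i, d); first by rewrite mem_index_enum.
  by split.
by move/in_bigsetU => [p _ []].
Qed.

Lemma lead_parts_disj k (p p' : lead_index) : p != p' -> lead_part k p `&` lead_part k p' = set0.
Proof.
move=> pp; apply/seteqP; split => // x [[_ Q1] [_ Q2]].
case: p p' pp Q1 Q2 => [i d] [i' d'] /= pp Q1 Q2.
have dT : (d <= T)%N by rewrite -ltnS.
have dT' : (d' <= T)%N by rewrite -ltnS.
have [e1 e2] := lead_at_uniq dT dT' Q1 Q2.
apply: (negP pp); apply/eqP; rewrite e1; congr pair; exact: val_inj.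
Qed.

Lemma saturated_lead_part k (p : lead_index) :
  (l <= k)%N -> (k <= l.+1)%N -> saturated l.+1 (lead_part k p).
Proof.
move=> lk kl; apply: saturated_lead; first lia.
apply: saturated_Xset; lia.
Qed.

Lemma fine_mu_XT k : (l <= k)%N -> (k <= l.+1)%N ->
  fine (mu (XT k : set S)) = \sum_(p : lead_index) fine (mu (lead_part k p : set S)).
Proof.
move=> lk kl; rewrite {1}(XT_decomp (k:=k)); last lia.
apply: fine_mu_bigsetU; first exact: index_enum_uniq.
- by move=> p; apply: measurable_saturated; exact: saturated_lead_part.
- by move=> p; case: (saturated_lead_part p lk kl).
- exact: lead_parts_disj.
Qed.

Lemma lead_slice_decomp i d : lead_slice i d =
  \big[setU/set0]_(k <- index_enum {: 'I_q}) shifted i d k.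
Proof.
apply/seteqP; split => y.
  move=> hy; have hy' := hy; case: hy' => /XTE [oy hB] Qy.
  have oc : o (XT_quot y).
    have hB' : inIdeal ord (2 * pi ^+ l) (B y - rho) by apply/inIdeal2E.
    by move: hB'; rewrite inIdeal_divE // mulf_neq0 ?piX_neq0.
  have [u0 hu] := lead_unit_unit Qy.
  have [k hk] := resid_cover (intOM oc (intO_inv_unit u0 hu)).
  apply/in_bigsetU; exists k; first by rewrite mem_index_enum.
  apply/in_translate_lead_slice1; split => //.
  have := pidMl hk (lead_unit_intO Qy).
  by rewrite mulrBr mulrCA divff // mulr1.
by move/in_bigsetU => [k _ /in_translate_lead_slice1 []].
Qed.

Lemma lead_shifts_disj i (d : 'I_T.+1) (k k' : 'I_q) : k != k' ->
  shifted i d k `&` shifted i d k' = set0.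
Proof.
move=> kk; apply/seteqP; split => // y.
move=> [/in_translate_lead_slice1 [[_ Qy] h1] /in_translate_lead_slice1 [_ h3]].
apply: (negP kk); apply/eqP; apply: resid_inj.
have [u0 hu] := lead_unit_unit Qy.
apply: (pidMr_unit (u:=lead_unit i d y)) => //.
have := pidB h3 h1.
set u := lead_unit i d y; set c := XT_quot y.
by have -> : c - u * nth 0 resid k' - (c - u * nth 0 resid k)
  = (nth 0 resid k - nth 0 resid k') * u by ring.
Qed.

Lemma fine_mu_lead_slice i d :
  fine (mu (lead_slice i d : set S)) = q%:R * fine (mu (lead_slice1 i d : set S)).
Proof.
have iP := saturated_lead_slice1 i d.
have hm : forall k, measurable (shifted i d k : set S).
  by move=> k; apply: measurable_saturated; apply: saturated_translate iP (lead_shift_intOn i d k).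
have hs : forall k, shifted i d k `<=` On.
  by move=> k; case: (saturated_translate iP (lead_shift_intOn i d k)).
rewrite lead_slice_decomp (fine_mu_bigsetU (index_enum_uniq _) hm hs (@lead_shifts_disj i d)).
have e1 : forall k, fine (mu (shifted i d k : set S)) = fine (mu (lead_slice1 i d : set S)).
  move=> k; case: hmu => _ ht; rewrite ht //;
    [exact: (lead_shift_intOn i d k) | exact: (measurable_saturated iP) | by case: iP].
rewrite (eq_bigr _ (fun k _ => e1 k)).
by rewrite sumr_const card_ord mulr_natl.
Qed.

Lemma fine_mu_XT_rec : fine (mu (XT l : set S)) = q%:R * fine (mu (XT l.+1 : set S)).
Proof.
rewrite fine_mu_XT // fine_mu_XT // mulr_sumr; apply: eq_bigr => -[i d] _.
exact: fine_mu_lead_slice.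
Qed.

End FixedLevel.

Lemma XlT_rec l : ((2 * T) + e + 1 <= l)%N ->
  Xl mu a l.+1 rho = Xl mu a l rho / q%:R.
Proof.
move=> hl; rewrite /Xl; have := fine_mu_XT_rec hl; rewrite /XT => ->.
have q0 : q%:R != 0 :> R by rewrite pnatr_eq0 -lt0n q_gt0.
by rewrite [q%:R * _]mulrC mulfK.
Qed.
End PowerTarget.

Variables (z : R[i]) (hz1 : `|z| < 1).

Lemma series_Xl_piX T : series_sumC (fun l => Xl mu a l (pi ^+ (2 * T))) z
    (\sum_(l < (2 * T + e + 1)%N) z ^+ l * (Xl mu a l (pi ^+ (2 * T)))%:C
     + z ^+ (2 * T + e + 1) / (1 - z / q%:R)
       * (Xl mu a (2 * T + e + 1)%N (pi ^+ (2 * T)))%:C).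
Proof.
set L0 := (2 * T + e + 1)%N.
pose c l := z ^+ l * (Xl mu a l (pi ^+ (2 * T)))%:C.
have -> : \sum_(l < L0) c l + z ^+ L0 / (1 - z / q%:R) * (Xl mu a L0 (pi ^+ (2 * T)))%:C
    = \sum_(l < L0) c l + (\sum_(i < 1) c (L0 + i)%N) / (1 - z / q%:R).
  by rewrite big_ord1 addn0 /c mulrAC.
apply: cvgC_geometric_tail => //.
  by rewrite -[z in z / _]expr1 norm_expr_divn_lt1 ?q_gt0.
have q0 : q%:R != 0 :> R[i] by rewrite pnatr_eq0 -lt0n q_gt0.
move=> l hl; rewrite /c addn1 XlT_rec // rmorphM fmorphV rmorph_nat exprS.
by field.
Qed.

Lemma series_Xl0 : series_sumC (fun l => Xl mu a l 0) z
    (\sum_(l < e) z ^+ l * (Xl mu a l 0)%:C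
     + z ^+ e / (1 - z ^+ 2 / q%:R ^+ n) * (Xl mu a e 0)%:C
     + z ^+ e.+1 / (1 - z ^+ 2 / q%:R ^+ n) * (Xl mu a e.+1 0)%:C).
Proof.
pose c l := z ^+ l * (Xl mu a l 0)%:C.
have -> : \sum_(l < e) c l + z ^+ e / (1 - z ^+ 2 / q%:R ^+ n) * (Xl mu a e 0)%:C
     + z ^+ e.+1 / (1 - z ^+ 2 / q%:R ^+ n) * (Xl mu a e.+1 0)%:C
    = \sum_(l < e) c l + (\sum_(i < 2) c (e + i)%N) / (1 - z ^+ 2 / q%:R ^+ n).
  by rewrite !big_ord_recr big_ord0 /= add0r addn0 addn1 /c; ring.
apply: cvgC_geometric_tail => //.
  by rewrite -natrX norm_expr_divn_lt1 ?expn_gt0 ?q_gt0.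
have qn0 : q%:R ^+ n != 0 :> R[i] by rewrite expf_neq0 // pnatr_eq0 -lt0n q_gt0.
move=> l hl; rewrite /c addn2 Xl0_rec // rmorphM fmorphV rmorph_nat natrX !exprS.
by field.
Qed.

End Form.
End Measure.
End Space.
End LocalField.

Theorem proposition2p4
  (R : realType) (K : fieldType) (ord : K -> int) (pi : K) (q : nat)
  (hK : is_local_field ord pi q)
  (h2 : (2 : K) != 0) (hres2 : inIdeal ord pi 2)
  (e : nat) (he : ord 2 = e%:Z)
  (n : nat) (a : 'I_n -> K) (haniso : anisotropic a)
  (hord : forall i : 'I_n, 0 <= ord (a i) <= 1)
  (mu : {measure set (kspace ord pi n) -> \bar R}) (hmu : is_haar_on_On mu)
  (z : R[i]) (hz0 : 0 < `|z|) (hz1 : `|z| < 1)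
  (T : nat) :
  let w := z / q%:R in
  let u := z ^+ 2 / q%:R ^+ n in
  let X := Xl mu a in
  series_sumC (fun l => X l (pi ^+ (2 * T)))  z
    (\sum_(l < (2 * T + e + 1)%N) z ^+ l * (X l (pi ^+ (2 * T)))%:C
     + z ^+ (2 * T + e + 1) / (1 - w) * (X (2 * T + e + 1)%N (pi ^+ (2 * T)))%:C)
  /\
  series_sumC (fun l => X l 0) z
    (\sum_(l < e) z ^+ l * (X l 0)%:C
     + z ^+ e / (1 - u) * (X e 0)%:C
     + z ^+ e.+1 / (1 - u) * (X e.+1 0)%:C).
Proof.
move=> w u X; split.
- exact: (series_Xl_piX hK hmu h2 he haniso hord hz1).
- exact: (series_Xl0 hK hmu h2 he haniso hord hz1).
Qed.
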